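(* For integers $b\ge a\ge 0$, $$\sum_{\substack{\pi\in\mathcal I_{a+b}(321)\\ \mathrm{fp}(\pi)\ge b-a}} q^{\mathrm{maj}(\pi)}=\binom{a+b}{a}_q.$$ Consequently, for integers $0\le \ell\le n$ with $\ell\equiv n\pmod 2$, $$\sum_{\substack{\pi\in\mathcal I_{n}(321)\\ \mathrm{fp}(\pi)=\ell}} q^{\mathrm{maj}(\pi)}=\binom{n}{\frac{n-\ell}{2}}_q-\binom{n}{\frac{n-\ell}{2}-1}_q,$$ with the convention that $\binom{n}{-1}_q=0$.
   Context: $\mathcal I_m(321)$ is the set of involutions in $\mathcal S_m$ avoiding $321$; $\mathrm{fp}(\pi)$ is its number of fixed points; $\mathrm{maj}(\pi)=\sum_{i:\pi(i)>\pi(i+1)} i$ is the major index. $\binom{n}{k}_q$ is the Gaussian binomial coefficient. *)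

From HB Require Import structures.
From mathcomp Require Import all_boot all_order all_algebra all_fingroup.
Set Implicit Arguments. Unset Strict Implicit. Unset Printing Implicit Defensive.
Import GRing.Theory.
Local Open Scope ring_scope.

Definition is_involution (m : nat) (s : 'S_m) : bool :=
  [forall i : 'I_m, s (s i) == i].

Definition avoids321 (m : nat) (s : 'S_m) : bool :=
  [forall i : 'I_m, forall j : 'I_m, forall k : 'I_m,
     ((i < j)%N && (j < k)%N) ==> ~~ ((s k < s j)%N && (s j < s i)%N)].

Definition fp (m : nat) (s : 'S_m) : nat := #|[set i : 'I_m | s i == i]|.

Definition oneline (m : nat) (s : 'S_m) : seq nat := [seq val (s i) | i <- enum 'I_m].

(* major index, positions 1-based: descent at position i+1 (1-based) when
   w_i > w_{i+1} (0-based indices i, i+1) *)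
Definition maj (m : nat) (s : 'S_m) : nat :=
  (\sum_(0 <= i < m.-1 | (nth 0 (oneline s) i.+1 < nth 0 (oneline s) i)%N) i.+1)%N.

Fixpoint qbinom (n k : nat) {struct n} : {poly int} :=
  match n, k with
  | _, 0%N => 1
  | 0%N, _.+1 => 0
  | n'.+1, k'.+1 => qbinom n' k' + 'X^(k'.+1) * qbinom n' k'.+1
  end.

(* convention [n, -1]_q = 0 : qbinom n (k-1) for k = 0 is 0 *)
Definition qbinom_pred (n k : nat) : {poly int} :=
  if k is k'.+1 then qbinom n k' else 0.

(* Code a permutation s of {0, ..., n-1} by its step word: position i is a
   Flat step if s i = i, an Up step if i < s i and a Down step if s i < i.
   For a 321-avoiding involution the openers, and likewise the closers, are
   matched in increasing order, so s is recovered from its code by pairing the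
   r-th Up step with the r-th Down step. The codes are therefore exactly the
   words ending at height 0 that never go below height 0 and take Flat steps
   only at height 0; moreover fp s = n - 2 #Down, and s has a descent at i
   exactly when a Down step follows a non-Down step, so maj becomes a statistic
   of the word. Splitting off the last step, the generating function of such
   words of length n ending at height h with at most k Down steps obeys the
   recursion of [n, k]_q as long as 2k + h <= n. Taking h = 0, k = a and
   n = a + b gives the first identity; the second is its difference in k. *)

From HB Require Import structures.
From mathcomp Require Import all_boot all_order all_algebra all_fingroup.
From mathcomp Require Import ring zify.
Set Implicit Arguments. Unset Strict Implicit. Unset Printing Implicit Defensive.
Import GRing.Theory.
Local Open Scope ring_scope.

(** * Gaussian binomial coefficients *)

Lemma qbinomn0 n : qbinom n 0 = 1.
Proof. by case: n. Qed.

Lemma qbinomS n k : qbinom n.+1 k.+1 = qbinom n k + 'X^(k.+1) * qbinom n k.+1.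
Proof. by []. Qed.

Lemma qbinom_small n k : (n < k)%N -> qbinom n k = 0.
Proof.
elim: n k => [|n IHn] [|k] //= lt_nk.
by rewrite !IHn ?mulr0 ?addr0 // ltnW.
Qed.

Lemma qbinomnn n : qbinom n n = 1.
Proof. by elim: n => //= n ->; rewrite qbinom_small // mulr0 addr0. Qed.

Lemma qbinomS_dual n k : qbinom n.+1 k.+1 = 'X^(n - k) * qbinom n k + qbinom n k.+1.
Proof.
elim: n k => [|n IHn] [|k].
- by rewrite qbinomS !qbinomn0 (@qbinom_small 0 1) // subnn expr0 mulr0 mul1r !addr0.
- by rewrite !qbinom_small // mulr0 addr0.
- by rewrite qbinomS [in RHS]qbinomS IHn !qbinomn0 !subn0 !exprS; ring.
rewrite qbinomS [in LHS]IHn [in LHS](IHn k.+1) ![in RHS]qbinomS subSS.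
have [le_kn|lt_nk] := leqP k.+1 n.
  rewrite !mulrDr !mulrA -!exprD.
  have -> : (k.+2 + (n - k.+1) = n.+1)%N by lia.
  have -> : (n - k + k.+1 = n.+1)%N by lia.
  ring.
have B0 : qbinom n k.+1 = 0 by apply: qbinom_small.
have C0 : qbinom n k.+2 = 0 by apply: qbinom_small; lia.
by rewrite B0 C0 !(mulr0, addr0).
Qed.

Lemma qbinom_sym n k : (k <= n)%N -> qbinom n (n - k) = qbinom n k.
Proof.
elim: n k => [|n IHn] [|k] le_kn //; first by rewrite subn0 qbinomnn qbinomn0.
rewrite subSS; have [lt_kn|le_nk] := ltnP k n; last first.
  have -> : k = n by lia.
  by rewrite subnn qbinomn0 qbinomnn.
rewrite -(subnSK lt_kn) qbinomS_dual subKn // IHn // subnSK // (IHn k (ltnW lt_kn)).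
by rewrite qbinomS addrC.
Qed.

Lemma qbinomS_split n k : (k < n)%N ->
  qbinom n.+1 k.+1 = qbinom n k.+1 + qbinom n k + ('X^n - 1) * qbinom n.-1 k.
Proof.
case: n => // n; rewrite ltnS succnK qbinomS_dual.
case: k => [|k] le_kn; first by rewrite subn0 !qbinomn0; ring.
rewrite subSS [X in 'X^_ * X]qbinomS [qbinom n.+1 k.+1]qbinomS_dual.
rewrite mulrDr mulrA -exprD.
have -> : (n - k + k.+1 = n.+1)%N by lia.
ring.
Qed.

(** * Ballot words *)

Notation step := (option bool).
Notation Flat := None.
Notation Up := (Some false).
Notation Down := (Some true).

Definition steps : seq step := [:: Flat; Up; Down].

Fixpoint words n : seq (seq step) :=
  if n is n'.+1 then [seq rcons w x | w <- words n', x <- steps] else [:: [::]].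

Definition ups (w : seq step) : nat := count (pred1 Up) w.
Definition downs (w : seq step) : nat := count (pred1 Down) w.

Definition step_ok (x : step) (d u : nat) : bool :=
  match x with Some true => (d < u)%N | Some false => true | None => d == u end.

Definition ballot (w : seq step) : bool :=
  all (fun i => step_ok (nth Flat w i) (downs (take i w)) (ups (take i w)))
      (iota 0 (size w)).

Definition word_maj (w : seq step) : nat :=
  (\sum_(0 <= i < (size w).-1 | (nth Flat w i != Down) && (nth Flat w i.+1 == Down)) i.+1)%N.

Lemma words_S n : words n.+1 = [seq rcons w x | w <- words n, x <- steps].
Proof. by []. Qed.

Lemma mem_words n w : (w \in words n) = (size w == n).
Proof.
elim: n w => [|n IHn] w; first by rewrite inE; case: w.
rewrite words_S.
case/lastP: w => [|w x]; rewrite ?size_rcons ?eqSS.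
  apply/negbTE/allpairsP => -[[v y] [_ _ /= /(congr1 size)]].
  by rewrite size_rcons.
rewrite -IHn; apply/allpairsP/idP => [[[v y] [v_n _ /= /rcons_inj [-> _]]] //|w_n].
by exists (w, x); split => //; case: x => [[]|].
Qed.

Lemma size_words n w : w \in words n -> size w = n.
Proof. by rewrite mem_words => /eqP. Qed.

Lemma uniq_words n : uniq (words n).
Proof.
elim: n => // n IHn; rewrite words_S; apply: allpairs_uniq => //.
by move=> [v x] [u y] _ _ /= /rcons_inj [-> ->].
Qed.

Lemma big_words_rcons (R : nmodType) n (P : pred (seq step)) (F : seq step -> R) :
  \sum_(w <- words n.+1 | P w) F w =
  \sum_(w <- words n | P (rcons w Flat)) F (rcons w Flat) +
  \sum_(w <- words n | P (rcons w Up)) F (rcons w Up) +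
  \sum_(w <- words n | P (rcons w Down)) F (rcons w Down).
Proof.
rewrite words_S big_mkcond big_allpairs_dep /=.
rewrite [X in _ = X + _ + _]big_mkcond [X in _ = _ + X + _]big_mkcond.
rewrite [X in _ = _ + X]big_mkcond -!big_split.
by apply: eq_bigr => w _; rewrite !big_cons big_nil addr0 !addrA.
Qed.

Lemma ups_rcons w x : ups (rcons w x) = (ups w + (x == Up))%N.
Proof. by rewrite /ups -cats1 count_cat /= addn0. Qed.

Lemma downs_rcons w x : downs (rcons w x) = (downs w + (x == Down))%N.
Proof. by rewrite /downs -cats1 count_cat /= addn0. Qed.

Lemma ups_downs_size w : (ups w + downs w <= size w)%N.
Proof.
elim/last_ind: w => // w x IHw.
by rewrite ups_rcons downs_rcons size_rcons; case: x => [[]|] /=; lia.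
Qed.

Lemma count_steps w : (count (pred1 Flat) w + ups w + downs w)%N = size w.
Proof.
rewrite /ups /downs; elim: w => //= x w IHw.
by case: x => [[]|] /=; lia.
Qed.

Lemma ballot_rcons w x : ballot (rcons w x) = ballot w && step_ok x (downs w) (ups w).
Proof.
rewrite /ballot size_rcons -addn1 iotaD all_cat /= andbT add0n.
rewrite nth_rcons ltnn eqxx -cats1 take_size_cat //; congr (_ && _).
apply: eq_in_all => i; rewrite mem_iota add0n => /andP [_ lt_iw].
by rewrite nth_cat lt_iw takel_cat // ltnW.
Qed.

Lemma ballot_downs_ups w : ballot w -> (downs w <= ups w)%N.
Proof.
elim/last_ind: w => // w x IHw.
rewrite ballot_rcons downs_rcons ups_rcons => /andP [/IHw].
by case: x => [[]|] /=; lia.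
Qed.

Lemma word_maj_rcons w x : word_maj (rcons w x) =
  (word_maj w + ((last Flat w != Down) && (x == Down)) * size w)%N.
Proof.
rewrite /word_maj size_rcons /=; case: (lastP w) => [|v y]; first by rewrite !big_geq // muln0.
rewrite last_rcons size_rcons /= big_mkcond [in RHS]big_mkcond big_nat_recr //=.
rewrite !nth_rcons !size_rcons !ltnn !eqxx /= mulnC; congr (_ + _)%N.
  apply: eq_big_seq => i; rewrite mem_index_iota => /andP [_ lt_iv].
  by rewrite !(nth_rcons _ (rcons v y)) size_rcons !ltnS lt_iv (ltnW lt_iv).
by rewrite ltnSn; case: (_ && _); rewrite ?muln1 ?muln0.
Qed.

Definition ballot_end k h w : bool :=
  [&& ballot w, ups w == (h + downs w)%N & (downs w <= k)%N].

Lemma ballot_end_Flat k h w :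
  ballot_end k h (rcons w Flat) = (h == 0%N) && ballot_end k 0 w.
Proof.
rewrite /ballot_end ballot_rcons ups_rcons downs_rcons /=.
by case: (ballot w); rewrite /= ?andbF //; apply/idP/idP; lia.
Qed.

Lemma ballot_end_Up k h w :
  ballot_end k h (rcons w Up) = (0 < h)%N && ballot_end k h.-1 w.
Proof.
rewrite /ballot_end ballot_rcons ups_rcons downs_rcons /=.
case bw: (ballot w); rewrite /= ?andbF //.
by have := ballot_downs_ups bw; case: h => [|h] /= du; try apply/idP/idP; lia.
Qed.

Lemma ballot_end_Down k h w :
  ballot_end k h (rcons w Down) = (0 < k)%N && ballot_end k.-1 h.+1 w.
Proof.
rewrite /ballot_end ballot_rcons ups_rcons downs_rcons /=.
by case: (ballot w) k => -[|k]; rewrite /= ?andbF //; try apply/idP/idP; lia.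
Qed.

Definition ballot_gf n k h : {poly int} :=
  \sum_(w <- words n | ballot_end k h w) 'X^(word_maj w).

Definition ballot_gf_nodown n k h : {poly int} :=
  \sum_(w <- words n | ballot_end k h w && (last Flat w != Down)) 'X^(word_maj w).

Lemma ballot_gf0 k h : ballot_gf 0 k h = (h == 0%N)%:R.
Proof. by rewrite /ballot_gf big_mkcond big_seq1 /ballot_end /word_maj big_geq //=; case: h. Qed.

Lemma sum_rcons_Down n k h :
  \sum_(w <- words n | ballot_end k h w) ('X^(word_maj (rcons w Down)) : {poly int}) =
  'X^n * ballot_gf_nodown n k h + (ballot_gf n k h - ballot_gf_nodown n k h).
Proof.
rewrite /ballot_gf_nodown /ballot_gf (bigID (fun w => last Flat w != Down)) /=.
rewrite [X in _ = _ + (X - _)](bigID (fun w => last Flat w != Down)) /=.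
rewrite [_ + _ - _]addrC addKr mulr_sumr; congr (_ + _).
  rewrite big_seq_cond [RHS]big_seq_cond.
  apply: eq_bigr => w /andP [/size_words <- /andP [_ not_down]].
  by rewrite word_maj_rcons not_down mul1n exprD mulrC.
by apply: eq_bigr => w /andP [_ /negbTE down]; rewrite word_maj_rcons down mul0n addn0.
Qed.

(* A Flat step is only allowed at height 0 and an Up step only leads to a
   positive height, so together they contribute [ballot_gf n k h.-1]. *)
Lemma ballot_gfS n k h : ballot_gf n.+1 k h = ballot_gf n k h.-1 +
  (if k is k'.+1 then
     'X^n * ballot_gf_nodown n k' h.+1 + (ballot_gf n k' h.+1 - ballot_gf_nodown n k' h.+1)
   else 0).
Proof.
rewrite /ballot_gf big_words_rcons; congr (_ + _).
  rewrite (eq_bigl _ _ (ballot_end_Flat k h)) (eq_bigl _ _ (ballot_end_Up k h)).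
  by case: h => [|h]; rewrite /= ?big_pred0_eq ?addr0 ?add0r;
    apply: eq_bigr => w _; rewrite word_maj_rcons andbF addn0.
rewrite (eq_bigl _ _ (ballot_end_Down k h)).
by case: k => [|k]; rewrite ?big_pred0_eq // sum_rcons_Down.
Qed.

Lemma ballot_gf_nodownS n k h : ballot_gf_nodown n.+1 k h.+1 = ballot_gf n k h.
Proof.
rewrite /ballot_gf_nodown big_words_rcons.
rewrite [X in X + _ + _]big_pred0 => [|w]; last by rewrite ballot_end_Flat.
rewrite [X in _ + X]big_pred0 => [|w]; last by rewrite last_rcons andbF.
rewrite add0r addr0; apply: eq_big => [w|w _]; first by rewrite ballot_end_Up last_rcons andbT.
by rewrite word_maj_rcons andbF addn0.
Qed.

Lemma ballot_gf_cap n k h : (n < k.+1 + k.+1 + h)%N -> ballot_gf n k.+1 h = ballot_gf n k h.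
Proof.
move=> lt_n; rewrite /ballot_gf big_seq_cond [RHS]big_seq_cond; apply: eq_bigl => w.
case w_n: (w \in words n) => //=; rewrite /ballot_end; case: (ballot w) => //=.
have := ups_downs_size w; rewrite (size_words w_n) => le_n.
by apply/idP/idP; lia.
Qed.

Lemma ballot_gf_closed n k h : (k + k + h <= n)%N -> ballot_gf n k h = qbinom n k.
Proof.
elim/ltn_ind: n k h => -[|n] IHn k h le_n.
  have [-> ->] : k = 0%N /\ h = 0%N by lia.
  by rewrite ballot_gf0 qbinomn0.
(* The induction hypothesis only misses h = 0, n = 2k - 1, where k Down steps
   do not fit and [2k - 1, k - 1] = [2k - 1, k]. *)
have gf_pred : ballot_gf n k h.-1 = qbinom n k.
  have [le_n'|lt_n] := leqP (k + k + h.-1) n; first exact: IHn.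
  have [k' def_k] : exists k', k = k'.+1 by exists k.-1; lia.
  have [def_n ->] : n = (k' + k').+1 /\ h = 0%N by lia.
  rewrite def_k ballot_gf_cap ?IHn; try lia.
  by rewrite -(qbinom_sym (n := n) (k := k'.+1)) def_n ?subSS ?addnK //; lia.
rewrite ballot_gfS gf_pred; case: k le_n {gf_pred} => [|k] le_n; first by rewrite addr0 !qbinomn0.
case: n IHn le_n => [|n] IHn le_n; first lia.
rewrite ballot_gf_nodownS !IHn; try lia.
by rewrite (qbinomS_split (n := n.+1)) ?succnK; [ring | lia].
Qed.

Section CountBefore.
Variables (n : nat) (T : eqType) (f : 'I_n -> T) (x : T).

Definition count_before (m : nat) : nat := #|[set j : 'I_n | (j < m)%N && (f j == x)]|.

Local Notation cb := count_before.

Lemma count_before0 : cb 0 = 0%N.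
Proof. by apply/eqP; rewrite cards_eq0; apply/eqP/setP => j; rewrite !inE ltn0. Qed.

Lemma leq_count_before m m' : (m <= m')%N -> (cb m <= cb m')%N.
Proof.
move=> le_mm'; apply: subset_leq_card; apply/subsetP => j; rewrite !inE.
by case/andP => lt_jm ->; rewrite (leq_trans lt_jm le_mm').
Qed.

Lemma ltn_count_before (j : 'I_n) m : f j == x -> (j < m)%N -> (cb j < cb m)%N.
Proof.
move=> fj lt_jm; apply: proper_card; apply/properP; split.
  by apply/subsetP => i; rewrite !inE => /andP [lt_ij ->]; rewrite (ltn_trans lt_ij lt_jm).
by exists j; rewrite !inE ?lt_jm ?fj ?ltnn.
Qed.

Lemma count_before_ltn (i j : 'I_n) : (cb i < cb j)%N -> (i < j)%N.
Proof.
by move=> lt_ij; rewrite ltnNge; apply: contraTN lt_ij => /leq_count_before; rewrite -leqNgt.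
Qed.

Lemma count_before_inj (i j : 'I_n) : f i == x -> f j == x -> cb i = cb j -> i = j.
Proof.
move=> fi fj eq_ij; apply: val_inj; case: (ltngtP i j) => // [lt_ij|lt_ji].
  by have := ltn_count_before fi lt_ij; rewrite eq_ij ltnn.
by have := ltn_count_before fj lt_ji; rewrite eq_ij ltnn.
Qed.

Lemma count_beforeS m (lt_mn : (m < n)%N) : cb m.+1 = (cb m + (f (Ordinal lt_mn) == x))%N.
Proof.
rewrite /count_before (cardsD1 (Ordinal lt_mn)) inE /= ltnSn /= addnC; congr (_ + _)%N.
apply: eq_card => j; rewrite !inE ltnS -val_eqE /=.
by case: (ltngtP j m) => //= ->; rewrite eqxx.
Qed.

Lemma count_before_ge m : (n <= m)%N -> cb m = cb n.
Proof.
by move=> le_nm; apply: eq_card => j; rewrite !inE ltn_ord (leq_trans (ltn_ord j)).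
Qed.

Lemma count_before_onto r : (r < cb n)%N -> exists2 j : 'I_n, f j == x & cb j = r.
Proof.
suff onto_m m : (r < cb m)%N -> exists2 j : 'I_n, f j == x & cb j = r by apply: onto_m.
elim: m => [|m IHm]; first by rewrite count_before0.
have [lt_mn|le_nm] := ltnP m n; last first.
  by rewrite count_before_ge ?(leqW le_nm) // -(count_before_ge le_nm).
rewrite count_beforeS; have [/IHm //|le_mr lt_r] := ltnP r (cb m).
exists (Ordinal lt_mn); move: lt_r; case: eqP => //= _ lt_r; lia.
Qed.

End CountBefore.

Lemma count_take n (T : eqType) (x0 x : T) (w : seq T) m : size w = n ->
  count (pred1 x) (take m w) = count_before (fun j : 'I_n => nth x0 w j) x m.
Proof.
move=> size_w; elim: m => [|m IHm]; first by rewrite take0 count_before0.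
have [lt_mn|le_nm] := ltnP m n.
  by rewrite (take_nth x0) ?size_w // -cats1 count_cat IHm (count_beforeS _ _ lt_mn) /= addn0.
have take_w k : (n <= k)%N -> take k w = w by move=> le_nk; rewrite take_oversize ?size_w.
rewrite take_w ?(leqW le_nm) // -[in LHS](take_w m) // IHm.
by rewrite [RHS]count_before_ge ?(leqW le_nm) // count_before_ge.
Qed.

Section Partner.
Variables (n : nat) (w : seq step).
Local Notation st := (fun j : 'I_n => nth Flat w j).
Local Notation cb := (count_before st).

Definition partner (i : 'I_n) : 'I_n :=
  if st i is Some b then
    odflt i [pick j | (st j == Some (~~ b)) && (cb (Some (~~ b)) j == cb (Some b) i)]
  else i.

Lemma partner_Flat (i : 'I_n) : st i = Flat -> partner i = i.
Proof. by rewrite /partner => ->. Qed.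

Lemma partner_eq (i j : 'I_n) b : st i = Some b -> st j = Some (~~ b) ->
  cb (Some (~~ b)) j = cb (Some b) i -> partner i = j.
Proof.
move=> st_i st_j cb_j; rewrite /partner st_i.
case: pickP => [k /andP [/eqP st_k /eqP cb_k] | no_j]; last first.
  by have := no_j j; rewrite st_j cb_j !eqxx.
by apply: (count_before_inj (f := st) (x := Some (~~ b))); rewrite ?st_k ?st_j ?cb_k.
Qed.

End Partner.

(** * Step codes of permutations *)

Lemma nth_oneline n (s : 'S_n) (i : 'I_n) : nth 0%N (oneline s) i = s i.
Proof. by rewrite /oneline (nth_map i) ?size_enum_ord // nth_ord_enum. Qed.

Definition step_of n (s : 'S_n) (i : 'I_n) : step :=
  if s i == i then Flat else Some (s i < i)%N.

Definition code n (s : 'S_n) : seq step := [seq step_of s i | i <- enum 'I_n].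

Definition two_increasing n (s : 'S_n) : Prop :=
  forall i j : 'I_n, (i < j)%N -> (s i < i)%N = (s j < j)%N -> (s i < s j)%N.

Section Code.
Variables (n : nat) (s : 'S_n).

Lemma size_code : size (code s) = n.
Proof. by rewrite size_map size_enum_ord. Qed.

Lemma nth_code (i : 'I_n) : nth Flat (code s) i = step_of s i.
Proof. by rewrite (nth_map i) ?size_enum_ord // nth_ord_enum. Qed.

Lemma step_ofD i : (step_of s i == Down) = (s i < i)%N.
Proof. by rewrite /step_of; case: (s i =P i) => [->|_]; [rewrite ltnn | case: (s i < i)%N]. Qed.

Lemma step_ofU i : (step_of s i == Up) = (i < s i)%N.
Proof.
rewrite /step_of; case: (s i =P i) => [->|/eqP]; first by rewrite ltnn.
by rewrite -val_eqE; case: (ltngtP (s i) i).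
Qed.

Lemma step_ofF i : (step_of s i == Flat) = (s i == i).
Proof. by rewrite /step_of; case: (s i =P i). Qed.

Lemma count_take_code x m : count (pred1 x) (take m (code s)) = count_before (step_of s) x m.
Proof.
by rewrite (count_take Flat _ _ size_code); apply: eq_card => j; rewrite !inE nth_code.
Qed.

Lemma count_code x : count (pred1 x) (code s) = count_before (step_of s) x n.
Proof. by rewrite -count_take_code take_oversize ?size_code. Qed.

Lemma fp_count_before : fp s = count_before (step_of s) Flat n.
Proof. by apply: eq_card => j; rewrite !inE ltn_ord step_ofF. Qed.

End Code.

Lemma is_involutionP n (s : 'S_n) : reflect (involutive s) (is_involution s).
Proof. by apply: (iffP forallP) => s_inv i; apply/eqP. Qed.

Lemma two_increasing_avoids321 n (s : 'S_n) : two_increasing s -> avoids321 s.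
Proof.
move=> s_two; apply/forallP => i; apply/forallP => j; apply/forallP => k.
apply/implyP => /andP [lt_ij lt_jk]; apply/negP => /andP [lt_kj lt_ji].
have := s_two i j lt_ij; have := s_two j k lt_jk; have := s_two i k (ltn_trans lt_ij lt_jk).
case: (s i < i)%N; case: (s j < j)%N; case: (s k < k)%N => s_ik s_jk s_ij;
  by first [move: (s_ij erefl) | move: (s_jk erefl) | move: (s_ik erefl)]; lia.
Qed.

Lemma avoids321_two_increasing n (s : 'S_n) :
  involutive s -> avoids321 s -> two_increasing s.
Proof.
move=> s_inv /forallP s321.
have no321 (a b c : 'I_n) : (a < b)%N -> (b < c)%N -> (s c < s b)%N -> (s b < s a)%N -> False.
  move=> lt_ab lt_bc lt_cb lt_ba.
  by have /forallP /(_ b) /forallP /(_ c) := s321 a; rewrite lt_ab lt_bc lt_cb lt_ba.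
move=> i j lt_ij same_ij.
case: (ltngtP (s i) (s j)) => // [lt_sji|/val_inj/perm_inj eq_ij]; last first.
  by move: lt_ij; rewrite eq_ij ltnn.
exfalso; case: (ltnP (s i) i) same_ij => [lt_sii|le_isi] same_ij.
  by apply: (no321 (s j) (s i) j); rewrite ?s_inv //; lia.
case: (ltngtP j (s j)) => [lt_jsj|lt_sjj|eq_jsj].
- by apply: (no321 i j (s j)); rewrite ?s_inv //; lia.
- lia.
- by apply: (no321 i j (s i)); rewrite ?s_inv //; lia.
Qed.

Section Involution.
Variables (n : nat) (s : 'S_n).
Hypotheses (s_inv : involutive s) (s_two : two_increasing s).

Local Notation cb x := (count_before (step_of s) x).

(* Under the hypothesis, s maps the Up positions below m' onto the Down
   positions below m. *)
Lemma count_before_Down_Up m m' :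
  (forall c : 'I_n, (s c < c)%N -> (c < m)%N = (s c < m')%N) -> cb Down m = cb Up m'.
Proof.
move=> same_range; rewrite /count_before -[RHS](card_imset _ (@perm_inj _ s)).
apply: eq_card => c; rewrite inE step_ofD; apply/andP/imsetP => [[lt_cm lt_scc]|[o]].
  by exists (s c); rewrite ?s_inv // inE step_ofU s_inv lt_scc -same_range ?lt_cm.
rewrite inE step_ofU => /andP [lt_om lt_oso] ->; rewrite s_inv.
by split => //; rewrite same_range s_inv.
Qed.

Lemma count_before_partner (i : 'I_n) : (i < s i)%N -> cb Down (s i) = cb Up i.
Proof.
move=> lt_isi; apply: count_before_Down_Up => c lt_scc.
apply/idP/idP => [lt_csi|lt_sci].
  by have := s_two lt_csi; rewrite s_inv lt_scc lt_isi; apply.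
have := s_two lt_sci; rewrite s_inv [(c < s c)%N]ltnNge [(s i < i)%N]ltnNge.
by rewrite (ltnW lt_scc) (ltnW lt_isi); apply.
Qed.

Lemma count_before_fixed (i : 'I_n) : s i = i -> cb Down i = cb Up i.
Proof.
move=> fix_i; apply: count_before_Down_Up => c lt_scc.
apply/idP/idP => [lt_ci|lt_sci]; first exact: ltn_trans lt_ci.
have := s_two lt_sci; rewrite s_inv fix_i ltnn [(c < s c)%N]ltnNge.
by rewrite (ltnW lt_scc); apply.
Qed.

Lemma count_before_Down_Up_all : cb Down n = cb Up n.
Proof. by apply: count_before_Down_Up => c _; rewrite !ltn_ord. Qed.

Lemma ballot_code : ballot (code s).
Proof.
apply/allP => i; rewrite size_code mem_iota add0n => /andP [_ lt_in].
rewrite -[i]/(nat_of_ord (Ordinal lt_in)) nth_code /downs /ups !count_take_code.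
set j := Ordinal lt_in; rewrite [step_of s j]/step_of.
case: (s j =P j) => [fix_j|_]; first by rewrite (count_before_fixed fix_j) /= eqxx.
case lt_sjj: (s j < j)%N => //=.
have lt_ssj : (s j < s (s j))%N by rewrite s_inv.
have := count_before_partner lt_ssj; rewrite s_inv => ->.
by apply: ltn_count_before; rewrite // step_ofU s_inv.
Qed.

Lemma ups_code : ups (code s) = downs (code s).
Proof. by rewrite /ups /downs !count_code count_before_Down_Up_all. Qed.

Lemma fp_code : (fp s + (downs (code s)).*2)%N = n.
Proof.
have := count_steps (code s).
by rewrite size_code ups_code -addnn addnA count_code -fp_count_before.
Qed.

Lemma descent_code (i j : 'I_n) : j = i.+1 :> nat ->
  (s j < s i)%N = (s i >= i)%N && (s j < j)%N.
Proof.
move=> def_j; have lt_ij : (i < j)%N by rewrite def_j.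
have [lt_sii|le_isi] := ltnP (s i) i; have [lt_sjj|le_jsj] := ltnP (s j) j => /=.
- have := s_two lt_ij; rewrite lt_sii lt_sjj => /(_ erefl) lt_sij.
  by apply/negbTE; rewrite -leqNgt ltnW.
- lia.
- have ne_sij : (s j : nat) != s i.
    by apply/eqP => /val_inj/perm_inj eq_ji; move: def_j; rewrite eq_ji; lia.
  lia.
- have := s_two lt_ij; rewrite ltnNge le_isi ltnNge le_jsj => /(_ erefl) lt_sij.
  by apply/negbTE; rewrite -leqNgt ltnW.
Qed.

Lemma maj_code : maj s = word_maj (code s).
Proof.
rewrite /maj /word_maj size_code big_nat_cond [RHS]big_nat_cond; apply: eq_bigl => k.
rewrite leq0n /=; case: (ltnP k n.-1) => lt_kn //=.
have lt_k : (k < n)%N by lia.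
have lt_k1 : (k.+1 < n)%N by lia.
rewrite -[k]/(nat_of_ord (Ordinal lt_k)) -[k.+1]/(nat_of_ord (Ordinal lt_k1)).
rewrite !nth_oneline !nth_code !step_ofD (descent_code (i := Ordinal lt_k)) //.
by rewrite -leqNgt.
Qed.

Lemma partner_code (i : 'I_n) : partner (code s) i = s i.
Proof.
have cb_code x m : count_before (fun j : 'I_n => nth Flat (code s) j) x m = cb x m.
  by apply: eq_card => j; rewrite !inE nth_code.
case: (s i =P i) => [fix_i|/eqP ne_sii].
  by rewrite fix_i partner_Flat // nth_code /step_of fix_i eqxx.
have st_i : nth Flat (code s) i = Some (s i < i)%N by rewrite nth_code /step_of (negbTE ne_sii).
apply: partner_eq st_i _ _.
  rewrite nth_code /step_of s_inv eq_sym (negbTE ne_sii).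
  by move: ne_sii; rewrite -val_eqE; case: ltngtP.
rewrite !cb_code; case: (ltngtP (s i) i) => [lt_sii|lt_isi|/val_inj eq_sii].
- by have := @count_before_partner (s i); rewrite s_inv => /(_ lt_sii) ->.
- by rewrite count_before_partner.
- by rewrite eq_sii eqxx in ne_sii.
Qed.

End Involution.

Lemma code_inj n (s1 s2 : 'S_n) : involutive s1 -> two_increasing s1 ->
  involutive s2 -> two_increasing s2 -> code s1 = code s2 -> s1 = s2.
Proof.
move=> inv1 two1 inv2 two2 eq_code; apply/permP => i.
by rewrite -(partner_code inv1 two1) eq_code partner_code.
Qed.

(** * Decoding ballot words *)

Section WordPerm.
Variables (n : nat) (w : seq step).
Hypotheses (size_w : size w = n) (ballot_w : ballot w) (ups_w : ups w = downs w).

Local Notation st := (fun j : 'I_n => nth Flat w j).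
Local Notation cb := (count_before st).

Lemma step_ok_nth (i : 'I_n) : step_ok (st i) (cb Down i) (cb Up i).
Proof.
move/allP: ballot_w => /(_ i); rewrite mem_iota size_w ltn_ord /= => /(_ isT).
by rewrite /downs /ups !(count_take Flat _ _ size_w).
Qed.

Lemma count_before_balanced : cb Down n = cb Up n.
Proof.
have count_w x : count (pred1 x) w = cb x n.
  by rewrite -(count_take Flat _ _ size_w) take_oversize ?size_w.
by rewrite -!count_w -/(ups w) -/(downs w) ups_w.
Qed.

Lemma partner_spec (i : 'I_n) b : st i = Some b ->
  st (partner w i) = Some (~~ b) /\ cb (Some (~~ b)) (partner w i) = cb (Some b) i.
Proof.
move=> st_i; suff [j /eqP st_j cb_j] :
    exists2 j : 'I_n, st j == Some (~~ b) & cb (Some (~~ b)) j = cb (Some b) i.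
  by rewrite (partner_eq (n := n) st_i st_j cb_j).
apply: count_before_onto; have := step_ok_nth i; rewrite st_i.
case: b st_i => st_i /= lt_du.
  exact: leq_trans lt_du (leq_count_before _ _ (ltnW (ltn_ord i))).
by rewrite count_before_balanced; apply: ltn_count_before; rewrite ?st_i.
Qed.

Lemma partner_involutive : involutive (@partner n w).
Proof.
move=> i; case st_i: (st i) => [b|]; last by rewrite !partner_Flat.
have [st_pi cb_pi] := partner_spec st_i.
by apply: (partner_eq (n := n) st_pi); rewrite negbK // st_i.
Qed.

Lemma partner_Down (i : 'I_n) : st i = Down -> (partner w i < i)%N.
Proof.
move=> st_i; have [_ cb_pi] := partner_spec st_i.
apply: (count_before_ltn (f := st) (x := Up)); rewrite cb_pi.
by have := step_ok_nth i; rewrite st_i.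
Qed.

Lemma partner_Up (i : 'I_n) : st i = Up -> (i < partner w i)%N.
Proof.
move=> st_i; have [st_pi cb_pi] := partner_spec st_i.
apply: (count_before_ltn (f := st) (x := Up)); rewrite -cb_pi.
by have := step_ok_nth (partner w i); rewrite st_pi.
Qed.

Definition word_perm : 'S_n := perm (can_inj partner_involutive).

Lemma word_permE : word_perm =1 @partner n w.
Proof. exact: permE. Qed.

Lemma step_of_word_perm (i : 'I_n) : step_of word_perm i = st i.
Proof.
rewrite /step_of word_permE; case st_i: (st i) => [[]|].
- by have lt_pi := partner_Down st_i; rewrite lt_pi ifN // neq_ltn lt_pi.
- by have lt_ip := partner_Up st_i; rewrite ltnNge (ltnW lt_ip) ifN // neq_ltn lt_ip orbT.
- by rewrite partner_Flat // eqxx.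
Qed.

Lemma code_word_perm : code word_perm = w.
Proof.
apply: (@eq_from_nth _ Flat); rewrite size_code ?size_w // => i lt_in.
by rewrite -[i]/(nat_of_ord (Ordinal lt_in)) nth_code step_of_word_perm.
Qed.

Lemma word_perm_involutive : involutive word_perm.
Proof. by move=> i; rewrite !word_permE partner_involutive. Qed.

Lemma partner_homo (i j : 'I_n) b : st i = Some b -> st j = Some b ->
  (i < j)%N -> (partner w i < partner w j)%N.
Proof.
move=> st_i st_j lt_ij; have [st_pi cb_pi] := partner_spec st_i.
have [_ cb_pj] := partner_spec st_j.
apply: (count_before_ltn (f := st) (x := Some (~~ b))); rewrite cb_pi cb_pj.
by apply: ltn_count_before; rewrite ?st_i.
Qed.

Lemma word_perm_two_increasing : two_increasing word_perm.
Proof.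
move=> i j lt_ij; rewrite !word_permE.
case st_i: (st i) => [[]|]; case st_j: (st j) => [[]|].
- by move=> _; apply: partner_homo st_i st_j lt_ij.
- by rewrite (partner_Down st_i) ltnNge (ltnW (partner_Up st_j)).
- by rewrite (partner_Down st_i) (partner_Flat st_j) ltnn.
- by rewrite (partner_Down st_j) ltnNge (ltnW (partner_Up st_i)).
- by move=> _; apply: partner_homo st_i st_j lt_ij.
- move=> _; have [_ cb_pi] := partner_spec st_i; rewrite (partner_Flat st_j).
  apply: (count_before_ltn (f := st) (x := Some (~~ false))); rewrite cb_pi /=.
  have := step_ok_nth j; rewrite st_j => /eqP ->.
  by apply: ltn_count_before; rewrite ?st_i.
- by rewrite (partner_Down st_j) (partner_Flat st_i) ltnn.
- by move=> _; rewrite (partner_Flat st_i); apply: ltn_trans lt_ij (partner_Up st_j).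
- by move=> _; rewrite (partner_Flat st_i) (partner_Flat st_j).
Qed.

End WordPerm.

Lemma code_onto n (w : seq step) : size w = n -> ballot w -> ups w = downs w ->
  exists s : 'S_n, [/\ involutive s, two_increasing s & code s = w].
Proof.
move=> size_w ballot_w ups_w; exists (word_perm size_w ballot_w ups_w); split.
- exact: word_perm_involutive.
- exact: word_perm_two_increasing.
- exact: code_word_perm.
Qed.

(** * Transfer to 321-avoiding involutions *)

Lemma big_code (R : nmodType) n (P : pred (seq step)) (F : seq step -> R) :
  \sum_(s : 'S_n | [&& is_involution s, avoids321 s & P (code s)]) F (code s) =
  \sum_(w <- words n | [&& ballot w, ups w == downs w & P w]) F w.
Proof.
rewrite -big_filter -(big_map (@code n) xpredT) -[RHS]big_filter.
apply: perm_big; apply: uniq_perm.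
- rewrite map_inj_in_uniq ?filter_uniq ?index_enum_uniq // => s1 s2.
  rewrite !mem_filter => /andP [/and3P [/is_involutionP inv1 a1 _] _].
  move=> /andP [/and3P [/is_involutionP inv2 a2 _] _] /code_inj.
  by apply=> //; apply: avoids321_two_increasing.
- by rewrite filter_uniq // uniq_words.
move=> w; rewrite mem_filter mem_words; apply/mapP/idP => [[s]|].
  rewrite mem_filter => /andP [/and3P [/is_involutionP s_inv a321 Ps] _] ->.
  have two := avoids321_two_increasing s_inv a321.
  by rewrite ballot_code // ups_code // eqxx Ps size_code eqxx.
case/andP => /and3P [bw /eqP uw Pw] /eqP size_w.
have [s [s_inv two code_s]] := code_onto size_w bw uw.
exists s => //; rewrite mem_filter mem_index_enum /= code_s Pw two_increasing_avoids321 //.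
by rewrite !andbT; apply/is_involutionP.
Qed.

Lemma sum_inv321_fp n (P Q : pred nat) :
  (forall d, (d.*2 <= n)%N -> P (n - d.*2)%N = Q d) ->
  \sum_(s : 'S_n | [&& is_involution s, avoids321 s & P (fp s)]) ('X^(maj s) : {poly int}) =
  \sum_(w <- words n | [&& ballot w, ups w == downs w & Q (downs w)]) 'X^(word_maj w).
Proof.
move=> PQ; rewrite -(@big_code _ n (fun w => Q (downs w)) (fun w => 'X^(word_maj w))).
apply: eq_big => s; last first.
  by case/and3P => /is_involutionP s_inv /(avoids321_two_increasing s_inv) two _; rewrite maj_code.
case: (is_involutionP s) => //= s_inv; case a321: (avoids321 s) => //=.
have fp_s := fp_code s_inv.
have -> : fp s = (n - (downs (code s)).*2)%N by lia.
by rewrite PQ //; lia.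
Qed.

Lemma sum_ballot_downs_eq n k : (k + k <= n)%N ->
  \sum_(w <- words n | [&& ballot w, ups w == downs w & downs w == k])
     ('X^(word_maj w) : {poly int})
  = qbinom n k - qbinom_pred n k.
Proof.
move=> le_kn; apply/eqP; rewrite eq_sym subr_eq -(ballot_gf_closed (h := 0)) ?addn0 //.
rewrite /ballot_gf (bigID (fun w => downs w == k)) /=; apply/eqP; congr (_ + _).
  apply: eq_bigl => w; rewrite /ballot_end add0n.
  by case: (downs w =P k) => [->|_]; rewrite ?leqnn ?andbT ?andbF.
case: k le_kn => [|k] le_kn /=.
  by rewrite big_pred0 // => w; rewrite /ballot_end leqn0; case: (downs w == 0%N); rewrite ?andbF.
rewrite -(ballot_gf_closed (k := k) (h := 0)); last lia.
apply: eq_bigl => w.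
by rewrite /ballot_end -!andbA [_ && (_ != _)]andbC -ltn_neqAle ltnS.
Qed.

Theorem mainTheorem13 :
  (forall a b : nat, (a <= b)%N ->
     \sum_(s : 'S_(a + b) | [&& is_involution s, avoids321 s & (b - a <= fp s)%N])
        ('X^(maj s) : {poly int})
     = qbinom (a + b) a)
  /\
  (forall n l : nat, (l <= n)%N -> ~~ odd (n - l) ->
     \sum_(s : 'S_n | [&& is_involution s, avoids321 s & fp s == l])
        ('X^(maj s) : {poly int})
     = qbinom n ((n - l)./2) - qbinom_pred n ((n - l)./2)).
Proof.
split=> [a b le_ab | n l le_ln even_nl].
  rewrite (@sum_inv321_fp _ _ (fun d => d <= a)%N) => [|d le_d]; last by apply/idP/idP; lia.
  by rewrite -(ballot_gf_closed (k := a) (h := 0)); last lia.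
have def_nl : (n - l = ((n - l)./2).*2)%N by rewrite even_halfK.
rewrite (@sum_inv321_fp _ (pred1 l) (pred1 (n - l)./2)) => [|d le_d]; last by apply/eqP/eqP; lia.
by apply: sum_ballot_downs_eq; lia.
Qed.
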